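(* Let $G$ be a $1$-series-parallel graph containing the edge $X_SX_T$. Then there exist $\epsilon>0$ and $N_0$ (depending only on $G$) such that for every $N\ge N_0$, every join instance over $G$ in which each edge relation has exactly $N$ tuples has $m$-width at most $2-\epsilon$.
   Context: A join over a graph $G$: each vertex is an attribute and each edge $\{X,Y\}$ is a binary relation with schema $(X,Y)$. A $1$-series-parallel graph consists of a source vertex $X_S$, a sink vertex $X_T$, and any number of paths of arbitrary length from $X_S$ to $X_T$, pairwise sharing no vertices other than $X_S,X_T$. For a join query $\mathcal R$ (set of relations, attribute set $\mathcal A$): $\mathrm{IN}=\sum_R|R|$, $\log=\log_{\mathrm{IN}}$; for a relation $S$, $A\subseteq\mathsf{attr}(S)$, $v\in\pi_A(S)$: $\mathsf{deg}(v,S,A)=|\{t\in S:\pi_A(t)=v\}|$; $d_{S,A}=\max_v\mathsf{deg}(v,S,A)$ for $A\ne\emptyset$, $d_{S,\emptyset}=|S|$; $d(A,B,S)=\log d_{\pi_B(S),A}$. Degree configurations: buckets $B_l=[2^l,2^{l+1})$ ordered by index; $c\in\mathcal C_2$ maps each $(R,A)$, $A\subseteq\mathsf{attr}(R)$, to a bucket with $A'\subseteq A\Rightarrow c(R,A)\le c(R,A')$, $c(R,\mathsf{attr}(R))=B_0$, $c(R,\emptyset)=B_{\lfloor\log_2|R|\rfloor}$; $R(c)=\{t\in R:\forall A,\ \mathsf{deg}(\pi_A(t),R,A)\in c(R,A)\}$, $\mathcal R(c)=\{R(c)\}$. For a set $\mathcal S$ of relations and $F\subseteq\mathcal A$, $m_F(\mathcal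 S)$ is the maximum of $s_F$ subject to $s_\emptyset=0$; $s_G\le s_{G'}$ for $G\subseteq G'$; $s_{B\cup E}\le s_{A\cup E}+d(A,B,S)$ for all $S\in\mathcal S$, $E\subseteq\mathcal A$, $A\subseteq B\subseteq\mathsf{attr}(S)$. A GHD of $\mathcal S$ is a pair $(\mathcal T,\chi)$, $\mathcal T$ a tree, $\chi$ mapping nodes to subsets of $\mathcal A$, such that every $S$ has a node $t$ with $\mathsf{attr}(S)\subseteq\chi(t)$ and for each attribute the nodes containing it form a connected subtree. $\mathsf{MW}(D,\mathcal S)=\max_t m_{\chi(t)}(\mathcal S)$, $\mathsf{MW}(\mathcal S)=\min_D\mathsf{MW}(D,\mathcal S)$, and the $m$-width of the instance is $\max_{c\in\mathcal C_2}\mathsf{MW}(\mathcal R(c))$. *)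

From Stdlib Require Import Reals.
From mathcomp Require Import all_boot.
Set Implicit Arguments. Unset Strict Implicit. Unset Printing Implicit Defensive.

(* G is 1-series-parallel with source s and sink t iff s <> t and there *)
(* is a list ps of paths (each given by its list of internal vertices), *)
(* internal vertices pairwise distinct and distinct from s,t, every     *)
(* vertex being s, t or internal to some path, and E being exactly the  *)
(* set of edges of the paths s -> p -> t.                               *)
Definition path_edges (V : finType) (s t : V) (p : seq V) : seq {set V} :=
  let q := s :: rcons p t in [seq [set x.1; x.2] | x <- zip q (behead q)].

Definition is_1SP (V : finType) (E : {set {set V}}) (s t : V) : Prop :=
  s != t /\
  exists ps : seq (seq V),
    [/\ uniq (s :: t :: flatten ps),
        (forall v : V, v \in s :: t :: flatten ps)
      & E = [set e | has (fun p => e \in path_edges s t p) ps]].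

(* Join instances: tuples are partial assignments V -> option D; a     *)
(* relation with schema e is a set of tuples whose support is exactly e.*)
Definition tup (V D : finType) := {ffun V -> option D}.
Definition relation (V D : finType) := {set tup V D}.

Definition proj (V D : finType) (A : {set V}) (u : tup V D) : tup V D :=
  [ffun x => if x \in A then u x else None].
Definition projR (V D : finType) (A : {set V}) (S : relation V D) : relation V D :=
  [set proj A u | u in S].

Definition deg (V D : finType) (v : tup V D) (S : relation V D) (A : {set V}) : nat :=
  #|[set u in S | proj A u == v]|.

Definition dmax (V D : finType) (S : relation V D) (A : {set V}) : nat :=
  if A == set0 then #|S| else \max_(v in projR A S) deg v S A.

Definition IN (V D : finType) (E : {set {set V}}) (I : {set V} -> relation V D) : nat :=
  \sum_(e in E) #|I e|.

(* log_n x  (Stdlib convention: ln x = 0 for x <= 0) *)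
Definition logb (n x : nat) : R := Rdiv (ln (INR x)) (ln (INR n)).

Definition dcoef (V D : finType) (n : nat) (A B : {set V}) (S : relation V D) : R :=
  logb n (dmax (projR B S) A).

(* Feasible points of the LP defining m_F(S), for the set of relations   *)
(* S = {Sc e : e in E} (relation Sc e has schema e), log base n.         *)
Definition feasible (V D : finType) (n : nat) (E : {set {set V}})
    (Sc : {set V} -> relation V D) (s : {set V} -> R) : Prop :=
  s set0 = R0 /\
  (forall G G' : {set V}, G \subset G' -> Rle (s G) (s G')) /\
  (forall e, e \in E -> forall Ex A B : {set V}, A \subset B -> B \subset e ->
     Rle (s (B :|: Ex)) (Rplus (s (A :|: Ex)) (dcoef n A B (Sc e)))).

Definition m_le (V D : finType) (n : nat) (E : {set {set V}})
    (Sc : {set V} -> relation V D) (F : {set V}) (w : R) : Prop :=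
  forall s, feasible n E Sc s -> Rle (s F) w.

(* Trees on nodes 'I_k.+1 given by a parent array (node 0 is the root). *)
Definition tree_adj (k : nat) (par : 'I_k.+1 -> 'I_k.+1) : rel 'I_k.+1 :=
  fun i j => ((0 < i) && (par i == j)) || ((0 < j) && (par j == i)).

Definition is_GHD (V : finType) (E : {set {set V}}) (k : nat)
    (par : 'I_k.+1 -> 'I_k.+1) (chi : 'I_k.+1 -> {set V}) : Prop :=
  (forall i : 'I_k.+1, 0 < i -> par i < i) /\
  (forall e, e \in E -> exists i, e \subset chi i) /\
  (forall (x : V) (i j : 'I_k.+1), x \in chi i -> x \in chi j ->
     connect [rel a b | [&& tree_adj par a b, x \in chi a & x \in chi b]] i j).

Definition MW_le (V D : finType) (n : nat) (E : {set {set V}})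
    (Sc : {set V} -> relation V D) (w : R) : Prop :=
  exists (k : nat) (par : 'I_k.+1 -> 'I_k.+1) (chi : 'I_k.+1 -> {set V}),
    is_GHD E par chi /\ forall i, m_le n E Sc (chi i) w.

(* Degree configurations c in C_2: c e A is the bucket index l of B_l. *)
Definition is_config (V D : finType) (E : {set {set V}})
    (I : {set V} -> relation V D) (c : {set V} -> {set V} -> nat) : Prop :=
  forall e, e \in E ->
    [/\ (forall A A' : {set V}, A' \subset A -> A \subset e -> c e A <= c e A'),
        c e e = 0
      & 2 ^ (c e set0) <= #|I e| < 2 ^ (c e set0).+1].

Definition Rc (V D : finType) (I : {set V} -> relation V D)
    (c : {set V} -> {set V} -> nat) (e : {set V}) : relation V D :=
  [set u in I e | [forall A : {set V}, (A \subset e) ==>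
     (2 ^ (c e A) <= deg (proj A u) (I e) A < 2 ^ (c e A).+1)]].

Definition mwidth_le (V D : finType) (E : {set {set V}})
    (I : {set V} -> relation V D) (w : R) : Prop :=
  forall c, is_config E I c -> MW_le (IN E I) E (Rc I c) w.

Definition instance_N (V D : finType) (E : {set {set V}})
    (I : {set V} -> relation V D) (N : nat) : Prop :=
  forall e, e \in E ->
    #|I e| = N /\ (forall u, u \in I e -> forall x : V, (u x != None) = (x \in e)).

(* Put M := 2 |V| + 1 and call a vertex v of an edge e heavy when its degree
   bucket c(e, {v}) is at least n^(1/M), where n = IN.  A heavy v takes at
   most N / n^(1/M) values in R_e(c), so d(∅, {v}, R_e(c)) <= 1 - 1/M; a light
   v has degree below 2 n^(1/M) <= n^(2/M), so d({v}, e, R_e(c)) <= 2/M.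
   Walk along every path from X_S up to its first edge with a heavy tail, the
   anchor a of the path.  Starting from the edge X_S X_T, the root bag made of
   X_S, X_T and these light prefixes has width at most 1 + |V| 2/M <= 2 - 1/M.
   Each remaining edge xy of the path gets its own bag {a, x, y}; these bags
   are chained towards X_T and the root, and a bound of (1 - 1/M) + 1 follows
   by first adding the heavy a and then the edge xy. *)

From Stdlib Require Import Reals Lra Lia.
From mathcomp Require Import all_boot zify.
Set Implicit Arguments. Unset Strict Implicit. Unset Printing Implicit Defensive.

Lemma proj_proj (V D : finType) (A B : {set V}) (u : tup V D) :
  A \subset B -> proj A (proj B u) = proj A u.
Proof.
move=> AB; apply/ffunP => x; rewrite !ffunE.
by case: ifP => // xA; rewrite (subsetP AB x xA).
Qed.

Lemma deg_projR_le (V D : finType) (A B : {set V}) (S : relation V D) w :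
  A \subset B -> deg w (projR B S) A <= deg w S A.
Proof.
move=> AB; rewrite /deg.
have -> : [set u in projR B S | proj A u == w] =
          proj B @: [set u in S | proj A u == w].
  apply/setP => x; rewrite inE; apply/andP/imsetP.
  - case=> /imsetP [y yS ->]; rewrite proj_proj // => yw.
    by exists y; rewrite // inE yS.
  - case=> y; rewrite inE => /andP [yS yw] ->.
    by split; [apply/imsetP; exists y | rewrite proj_proj].
exact: leq_imset_card.
Qed.

Lemma deg_subset (V D : finType) (A : {set V}) (S S' : relation V D) w :
  S \subset S' -> deg w S A <= deg w S' A.
Proof.
move=> SS'; apply/subset_leq_card/subsetP => u.
by rewrite !inE => /andP [/(subsetP SS') -> ->].
Qed.

Section ConfigurationCounts.
Variables (V D : finType) (I : {set V} -> relation V D).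
Variables (c : {set V} -> {set V} -> nat) (e : {set V}) (v : V).
Hypothesis ve : v \in e.

Lemma Rc_subset : Rc I c e \subset I e.
Proof. by apply/subsetP => u; rewrite inE => /andP[]. Qed.

Lemma Rc_deg1 u : u \in Rc I c e ->
  2 ^ c e [set v] <= deg (proj [set v] u) (I e) [set v] < 2 ^ (c e [set v]).+1.
Proof. by rewrite inE => /andP [_ /forallP /(_ [set v])]; rewrite sub1set ve. Qed.

(* Every value of [v] in [Rc I c e] has at least [2 ^ c e [set v]] extensions
   in [I e]. *)
Lemma card_projR1_Rc : #|projR [set v] (Rc I c e)| * 2 ^ c e [set v] <= #|I e|.
Proof.
set P := projR [set v] (Rc I c e).
have PS : P \subset proj [set v] @: I e by apply/imsetS/Rc_subset.
have -> : #|I e| = \sum_(w in proj [set v] @: I e) \sum_(u in I e | proj [set v] u == w) 1.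
  by rewrite -sum1_card (partition_big_imset (proj [set v])).
rewrite (big_setID P) /= (setIidPr PS) -sum_nat_const.
apply: leq_trans (leq_addr _ _); apply: leq_sum => _ /imsetP [u uR ->].
apply: leq_trans (proj1 (andP (Rc_deg1 uR))) _.
by rewrite /deg sum1_card; apply/subset_leq_card/subsetP => x; rewrite !inE.
Qed.

Lemma dmax1_projR_Rc : dmax (projR e (Rc I c e)) [set v] <= 2 ^ (c e [set v]).+1.
Proof.
have v_set0 : ([set v] == set0) = false by apply/negbTE/set0Pn; exists v; rewrite inE.
rewrite /dmax v_set0; apply/bigmax_leqP => _ /imsetP [_ /imsetP [u uR ->] ->].
rewrite proj_proj ?sub1set //.
apply: leq_trans (deg_projR_le _ _ (_ : [set v] \subset e)) _; first by rewrite sub1set.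
apply: leq_trans (deg_subset _ _ Rc_subset) _.
exact/ltnW/(proj2 (andP (Rc_deg1 uR))).
Qed.

End ConfigurationCounts.

Lemma N_le_IN (V D : finType) (E : {set {set V}}) (I : {set V} -> relation V D) N e :
  instance_N E I N -> e \in E -> N <= IN E I.
Proof.
move=> I_N eE; rewrite /IN (bigD1 e) //=; have [-> _] := I_N _ eE.
exact: leq_addr.
Qed.

Section NatLog.
Local Open Scope R_scope.

Lemma INR_gt0 x : (0 < x)%N -> 0 < INR x.
Proof. by move=> x_gt0; apply/lt_0_INR/ltP. Qed.

Lemma ln_INR0 : ln (INR 0) = 0.
Proof. by rewrite /ln; case: Rlt_dec => //= h; exfalso; lra. Qed.

Lemma ln_le x y : 0 < x -> x <= y -> ln x <= ln y.
Proof. by move=> x_gt0 [xy|->]; [left; apply: ln_increasing | right]. Qed.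

Lemma ln_nat_le x y : (x <= y)%N -> ln (INR x) <= ln (INR y).
Proof.
case: x => [|x] xy; last by apply: ln_le; [apply: INR_gt0 | apply/le_INR/leP].
rewrite ln_INR0; case: y xy => [|y] _; first by rewrite ln_INR0; right.
by rewrite -ln_1; apply: ln_le; [lra | apply/(le_INR 1)/leP].
Qed.

Lemma ln_nat_ge0 x : 0 <= ln (INR x).
Proof. by rewrite -ln_INR0; apply: ln_nat_le. Qed.

Lemma ln_nat_lt x y : (0 < x)%N -> (x < y)%N -> ln (INR x) < ln (INR y).
Proof. by move=> x_gt0 xy; apply: ln_increasing; [apply: INR_gt0 | apply/lt_INR/ltP]. Qed.

Lemma ln_nat_gt0 x : (1 < x)%N -> 0 < ln (INR x).
Proof. by move=> x_gt1; rewrite -ln_1; apply: ln_increasing; [lra | apply/(lt_INR 1)/ltP]. Qed.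

Lemma ln_natM x y : (0 < x)%N -> (0 < y)%N ->
  ln (INR (x * y)) = ln (INR x) + ln (INR y).
Proof. by move=> x_gt0 y_gt0; rewrite mult_INR ln_mult //; apply: INR_gt0. Qed.

Lemma ln_natX x k : (0 < x)%N -> ln (INR (x ^ k)) = INR k * ln (INR x).
Proof.
move=> x_gt0; rewrite -ln_pow; last exact: INR_gt0.
by congr ln; elim: k => [|k IHk] //=; rewrite expnS mult_INR IHk.
Qed.

Lemma logb_le_div n x a b : (1 < n)%N -> 0 < b ->
  b * ln (INR x) <= a * ln (INR n) -> logb n x <= a / b.
Proof.
move=> n_gt1 b_gt0 le_ab; have ln_n := ln_nat_gt0 n_gt1.
apply: (Rmult_le_reg_r (ln (INR n) * b)); first exact: Rmult_lt_0_compat.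
rewrite /logb.
have -> : ln (INR x) / ln (INR n) * (ln (INR n) * b) = b * ln (INR x) by field; lra.
have -> : a / b * (ln (INR n) * b) = a * ln (INR n) by field; lra.
exact: le_ab.
Qed.

Lemma logb_le1 n x : (1 < n)%N -> (x <= n)%N -> logb n x <= 1.
Proof.
move=> n_gt1 xn; rewrite -[1]Rdiv_1_r.
apply: logb_le_div => //; first lra.
by have := ln_nat_le xn; lra.
Qed.

Lemma logb_heavy n d k M : (1 < n)%N -> (0 < M)%N ->
  (d * 2 ^ k <= n)%N -> (n <= (2 ^ k) ^ M)%N -> logb n d <= 1 - / INR M.
Proof.
move=> n_gt1 M_gt0 dk_le kM_ge.
have M_ge1 : 1 <= INR M by apply/(le_INR 1)/leP.
have ln_n := ln_nat_gt0 n_gt1.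
have ln_k := ln_nat_ge0 (2 ^ k).
have ln_kM := ln_nat_le kM_ge; rewrite ln_natX ?expn_gt0 // in ln_kM.
have -> : 1 - / INR M = (INR M - 1) / INR M by field; lra.
apply: logb_le_div; rewrite //; first lra.
case: d dk_le => [|d] dk_le; first by rewrite ln_INR0; nra.
have := ln_nat_le dk_le; rewrite ln_natM ?expn_gt0 //; nra.
Qed.

Lemma logb_light n d k M : (1 < n)%N -> (0 < M)%N ->
  (d <= 2 ^ k.+1)%N -> ((2 ^ k) ^ M < n)%N -> (2 ^ M <= n)%N -> logb n d <= 2 / INR M.
Proof.
move=> n_gt1 M_gt0 d_le kM_lt M_le.
have ln_n := ln_nat_gt0 n_gt1.
have ln_2 := ln_nat_ge0 2.
have ln_k := ln_nat_ge0 (2 ^ k).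
have kM_gt0 : (0 < (2 ^ k) ^ M)%N by rewrite !expn_gt0.
have ln_kM := ln_nat_lt kM_gt0 kM_lt; rewrite ln_natX ?expn_gt0 // in ln_kM.
have ln_M := ln_nat_le M_le; rewrite ln_natX // in ln_M.
apply: logb_le_div; first exact: n_gt1; first exact: INR_gt0.
case: d d_le => [|d] d_le; first by rewrite ln_INR0; nra.
have := pos_INR M; have := ln_nat_le d_le; rewrite expnS ln_natM ?expn_gt0 //; nra.
Qed.

End NatLog.

Section RootedTreeGHD.
Variables (V T : finType) (E : {set {set V}}) (root : T).
Variables (bag : T -> {set V}) (parent : T -> T) (rank : T -> nat).
Hypothesis rank_inj : injective rank.
Hypothesis rank_root : rank root = 0.
Hypothesis rank_parent : forall x, x != root -> rank (parent x) < rank x.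
Hypothesis bag_cover : forall e, e \in E -> exists x, e \subset bag x.
(* Running intersection: the nodes whose bag contains [v] form a subtree
   with top node [r]. *)
Hypothesis bag_top : forall v, exists r, forall x,
  v \in bag x -> x = r \/ (x != root /\ v \in bag (parent x)).

Let k := \max_(x : T) rank x.

(* Nodes are numbered by rank; numbers that are the rank of no node become
   children of the root with an empty bag. *)
Definition rank_node (x : T) : 'I_k.+1 := inord (rank x).
Definition node_of (i : 'I_k.+1) : option T := [pick x | rank x == i].
Definition node_bag (i : 'I_k.+1) : {set V} :=
  if node_of i is Some x then bag x else set0.
Definition node_parent (i : 'I_k.+1) : 'I_k.+1 :=
  if node_of i is Some x then (if x == root then ord0 else rank_node (parent x))
  else ord0.

Lemma rank_nodeK x : rank_node x = rank x :> nat.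
Proof. by rewrite /rank_node inordK // ltnS; apply: leq_bigmax. Qed.

Lemma node_of_rank x : node_of (rank_node x) = Some x.
Proof.
rewrite /node_of; case: pickP => [y /eqP ry | /(_ x)].
  by congr Some; apply: rank_inj; rewrite ry rank_nodeK.
by rewrite rank_nodeK eqxx.
Qed.

Lemma node_ofK i x : node_of i = Some x -> rank_node x = i.
Proof.
rewrite /node_of; case: pickP => // y /eqP ry [<-].
by apply: val_inj => /=; rewrite rank_nodeK.
Qed.

Lemma node_bag_rank x : node_bag (rank_node x) = bag x.
Proof. by rewrite /node_bag node_of_rank. Qed.

Lemma node_parent_lt (i : 'I_k.+1) : 0 < i -> node_parent i < i.
Proof.
rewrite /node_parent; case ix: (node_of i) => [x|] //.
rewrite -(node_ofK ix) rank_nodeK; case: eqP => [->|/eqP xr _].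
  by rewrite rank_root.
by rewrite rank_nodeK rank_parent.
Qed.

Let subtree_rel v :=
  [rel a b | [&& tree_adj node_parent a b, v \in node_bag a & v \in node_bag b]].

Lemma connect_top v r (i : 'I_k.+1) :
  (forall x, v \in bag x -> x = r \/ (x != root /\ v \in bag (parent x))) ->
  v \in node_bag i -> connect (subtree_rel v) i (rank_node r).
Proof.
move=> top; elim/ltn_ind: {i}(val i) {-2}i (erefl (val i)) => m IH i im vi.
move: (vi); rewrite /node_bag; case ix: (node_of i) => [x|]; last by rewrite inE.
have ex := node_ofK ix; subst i => vx; move: im => /= /[!rank_nodeK] im.
case: (top x vx) => [-> | [xr vpx]]; first exact: connect0.
have lt_px : rank (parent x) < rank x by apply: rank_parent.
apply: (connect_trans (y := rank_node (parent x))); last first.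
  by apply: (IH (rank (parent x))); rewrite ?node_bag_rank //= ?rank_nodeK -?im.
apply: connect1; rewrite /= vi node_bag_rank vpx /tree_adj !andbT.
rewrite /node_parent node_of_rank (negbTE xr) eqxx andbT.
by apply/orP; left; rewrite rank_nodeK; apply: leq_ltn_trans lt_px.
Qed.

Lemma ghd_of_rooted_tree :
  exists k (par : 'I_k.+1 -> 'I_k.+1) (chi : 'I_k.+1 -> {set V}),
    is_GHD E par chi /\ forall i, chi i = set0 \/ exists x, chi i = bag x.
Proof.
exists k, node_parent, node_bag; split; last first.
  by move=> i; rewrite /node_bag; case: (node_of i) => [x|]; [right; exists x | left].
split; first exact: node_parent_lt.
split; first by move=> e /bag_cover [x ex]; exists (rank_node x); rewrite node_bag_rank.
move=> v i j vi vj; have [r top] := bag_top v.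
have sym : symmetric (subtree_rel v).
  move=> a b; rewrite /= /tree_adj orbC.
  by case: (v \in node_bag a); case: (v \in node_bag b); rewrite ?andbT ?andbF.
rewrite (connect_trans (connect_top top vi)) // (sym_connect_sym sym).
exact: connect_top.
Qed.

End RootedTreeGHD.

Definition spine (V : finType) (s t : V) (p : seq V) : seq V := s :: rcons p t.

Lemma path_edgesP (V : finType) (s t : V) p e :
  e \in path_edges s t p <->
  exists2 m, m <= size p &
    e = [set nth s (spine s t p) m; nth s (spine s t p) m.+1].
Proof.
rewrite /path_edges /=.
have sz : size (zip (s :: rcons p t) (rcons p t)) = (size p).+1.
  by rewrite size_zip /= size_rcons minnE subSnn subn1.
split.
- case/mapP => x /(nthP (s, s)) [m m_lt <-] ->; rewrite sz in m_lt.
  by exists m => //; rewrite nth_zip_cond sz m_lt.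
- case=> m m_le ->; apply/mapP.
  exists (nth (s, s) (zip (s :: rcons p t) (rcons p t)) m); first by rewrite mem_nth ?sz.
  by rewrite nth_zip_cond sz ltnS m_le.
Qed.

Section SeriesParallelTree.
Variables (V : finType) (s t : V) (ps : seq (seq V)).
Hypothesis vertices_uniq : uniq (s :: t :: flatten ps).
Hypothesis vertices_cover : forall v : V, v \in s :: t :: flatten ps.
Variable heavy : seq V -> nat -> bool.

Local Notation inner := (flatten ps).
Local Notation vertices := (s :: t :: flatten ps).
Local Notation q p := (nth s (spine s t p)).

(* [heavy p m] says that edge [m] of [p], from [q p m] to [q p m.+1], has a
   heavy tail; [first_heavy p] is [(size p).+1] when no edge of [p] does. *)
Definition first_heavy p := find (heavy p) (iota 0 (size p).+1).
Definition anchor p := q p (first_heavy p).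
Definition root_bag : {set V} :=
  [set s; t] :|: [set x | has (fun p => x \in take (first_heavy p) p) ps].
Definition path_of v := nth [::] ps (find (fun p => v \in p) ps).

(* Node [None] is the root; node [Some v] for the [i]-th inner vertex [v]
   of a path [p] carries the bag covering edge [i.+1] of [p] (when it lies
   after the first heavy edge) and hangs below the node of the next vertex. *)
Definition bag (y : option V) : {set V} :=
  if y is Some v then
    if v \in inner then
      let p := path_of v in let i := index v p in
      if first_heavy p <= i then [set anchor p; q p i.+1; q p i.+2] else set0
    else set0
  else root_bag.

Definition parent (y : option V) : option V :=
  if y is Some v then
    if v \in inner then
      let p := path_of v in let i := index v p in
      if i.+1 < size p then Some (nth s p i.+1) else None
    else None
  else None.

Definition rank (y : option V) : nat :=
  if y is Some v then size vertices - index v vertices else 0.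

Lemma vertices_uniqP : [/\ s != t, s \notin inner, t \notin inner & uniq inner].
Proof.
by move: vertices_uniq; rewrite /= inE negb_or => /andP [/andP [-> ->] /andP [-> ->]].
Qed.

Lemma s_notin_inner : s \notin inner. Proof. by case: vertices_uniqP. Qed.
Lemma t_notin_inner : t \notin inner. Proof. by case: vertices_uniqP. Qed.

Lemma mem_inner p v : p \in ps -> v \in p -> v \in inner.
Proof. by move=> pin vp; apply/flattenP; exists p. Qed.

Lemma path_uniq p : p \in ps -> uniq p.
Proof.
case: vertices_uniqP => _ _ _; elim: ps => //= p0 ps' IH.
rewrite cat_uniq inE => /and3P [u0 _ u1] /orP [/eqP -> // | pin].
exact: IH.
Qed.

Lemma mem_path_inj p p' v : p \in ps -> p' \in ps -> v \in p -> v \in p' -> p = p'.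
Proof.
case: vertices_uniqP => _ _ _; elim: ps => //= p0 ps' IH.
rewrite cat_uniq => /and3P [u0 disj u1].
rewrite !inE => /orP [/eqP -> | pin] /orP [/eqP -> | pin'] // vp vp'.
- by case/hasP: disj; exists v => //; apply/flattenP; exists p'.
- by case/hasP: disj; exists v => //; apply/flattenP; exists p.
- exact: IH.
Qed.

Lemma path_ofP v : v \in inner -> path_of v \in ps /\ v \in path_of v.
Proof.
move=> /flattenP [p pin vp].
have has_v : has (fun p => v \in p) ps by apply/hasP; exists p.
by split; [rewrite mem_nth // -has_find | exact: (nth_find [::] has_v)].
Qed.

Lemma path_of_nth p i : p \in ps -> i < size p ->
  let v := nth s p i in [/\ v \in inner, path_of v = p & index v p = i].
Proof.
move=> pin i_lt v; have vp : v \in p by apply: mem_nth.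
have [pv_in vpv] := path_ofP (mem_inner pin vp).
split; [exact: mem_inner vp | exact: mem_path_inj vpv vp | ].
exact: index_uniq (path_uniq pin).
Qed.

Lemma inner_nth v : v \in inner ->
  let p := path_of v in
  [/\ p \in ps, index v p < size p & v = nth s p (index v p)].
Proof. by move=> /path_ofP [pin vp]; rewrite /= index_mem nth_index. Qed.

Lemma spineS p i : i < size p -> q p i.+1 = nth s p i.
Proof. by move=> i_lt; rewrite /= nth_rcons i_lt. Qed.

Lemma spine_last p : q p (size p).+1 = t.
Proof. by rewrite /= nth_rcons ltnn eqxx. Qed.

Lemma index_inner_succ p i : p \in ps -> i.+1 < size p ->
  index (nth s p i.+1) inner = (index (nth s p i) inner).+1.
Proof.
case: vertices_uniqP => _ _ _; elim: ps => //= p0 ps' IH.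
rewrite cat_uniq => /and3P [u0 disj u1].
rewrite inE => /orP [/eqP -> | pin] i_lt.
  by rewrite !index_cat !mem_nth ?(ltnW i_lt) // !index_uniq ?(ltnW i_lt).
have notin_p0 x : x \in p -> x \notin p0.
  move=> xp; apply: contraNN disj => x0.
  by apply/hasP; exists x => //; apply/flattenP; exists p.
rewrite !index_cat !(negbTE (notin_p0 _ _)) ?mem_nth ?(ltnW i_lt) //.
by rewrite IH // addnS.
Qed.

Lemma bag_at p i : p \in ps -> i < size p -> first_heavy p <= i ->
  bag (Some (nth s p i)) = [set anchor p; q p i.+1; q p i.+2].
Proof.
by move=> pin i_lt hi; case: (path_of_nth pin i_lt) => vi pE iE; rewrite /bag vi pE iE hi.
Qed.

Lemma parent_at p i : p \in ps -> i < size p ->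
  parent (Some (nth s p i)) = if i.+1 < size p then Some (nth s p i.+1) else None.
Proof.
by move=> pin i_lt; case: (path_of_nth pin i_lt) => vi pE iE; rewrite /parent vi pE iE.
Qed.

Lemma first_heavy_le p : first_heavy p <= (size p).+1.
Proof. by rewrite -[X in _ <= X](size_iota 0) find_size. Qed.

Lemma heavy_first_heavy p : first_heavy p <= size p -> heavy p (first_heavy p).
Proof.
move=> le_p; have has_heavy : has (heavy p) (iota 0 (size p).+1).
  by rewrite has_find size_iota ltnS.
by have := nth_find 0 has_heavy; rewrite nth_iota // -has_find size_iota.
Qed.

Lemma before_first_heavy p l : l < first_heavy p -> ~~ heavy p l.
Proof.
move=> lt_l; have := before_find 0 lt_l.
by rewrite nth_iota ?add0n => [->|]; last exact: leq_trans lt_l (first_heavy_le p).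
Qed.

Lemma spine_in_root_bag p l : p \in ps ->
  (l <= first_heavy p) || (l == (size p).+1) -> l <= (size p).+1 -> q p l \in root_bag.
Proof.
move=> pin l_heavy l_le; case: l => [|l] in l_heavy l_le *; first by rewrite !inE eqxx.
have [l_lt | ->] : l < size p \/ l = size p by lia.
  rewrite spineS // inE; apply/orP; right; rewrite inE; apply/hasP; exists p => //.
  rewrite in_take ?mem_nth // index_uniq ?path_uniq //.
  by move: l_heavy; rewrite eqSS (ltn_eqF l_lt) orbF.
by rewrite spine_last !inE eqxx orbT.
Qed.

Lemma anchor_in_root_bag p : p \in ps -> first_heavy p <= size p -> anchor p \in root_bag.
Proof. by move=> pin le_p; apply: spine_in_root_bag; rewrite ?leqnn // leqW. Qed.

Lemma nth_notin_root_bag p i : p \in ps -> i < size p -> first_heavy p <= i ->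
  nth s p i \notin root_bag.
Proof.
move=> pin i_lt hi; case: (path_of_nth pin i_lt) => vi _ vidx.
rewrite !inE; apply/negP => /orP [/orP [] /eqP e | /hasP [p' p'in vp']].
- by move: s_notin_inner; rewrite -e vi.
- by move: t_notin_inner; rewrite -e vi.
have ep : p' = p by apply: mem_path_inj p'in pin (mem_take vp') (mem_nth _ i_lt).
by move: vp'; rewrite ep in_take ?mem_nth // vidx ltnNge hi.
Qed.

Lemma anchor_in_parent_bag p i : p \in ps -> i < size p -> first_heavy p <= i ->
  anchor p \in bag (parent (Some (nth s p i))).
Proof.
move=> pin i_lt hi; rewrite parent_at //; case: ifP => i1_lt.
  by rewrite (bag_at pin i1_lt (leqW hi)) !inE eqxx.
by apply: anchor_in_root_bag => //; apply: leq_trans hi (ltnW i_lt).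
Qed.

Lemma bag_top (x : V) : exists r, forall y,
  x \in bag y -> y = r \/ (y != None /\ x \in bag (parent y)).
Proof.
exists (if x \in root_bag then None else Some x) => -[v|] xy; last by rewrite xy; left.
have vi : v \in inner by move: xy; rewrite /bag; case: ifP => //; rewrite inE.
case: (inner_nth vi); set p := path_of v; set i := index v p => pin i_lt vE.
have [hi | lt_i] := leqP (first_heavy p) i; last first.
  by move: xy; rewrite /bag vi -/p -/i leqNgt lt_i inE.
rewrite vE bag_at // !inE in xy; rewrite vE.
case/orP: xy => [/orP [] | ] /eqP ->.
- by right; split => //; apply: anchor_in_parent_bag.
- by left; rewrite spineS // (negbTE (nth_notin_root_bag pin i_lt hi)).
- right; split => //; rewrite parent_at //; case: ifP => i1_lt.
    by rewrite (bag_at pin i1_lt (leqW hi)) !inE eqxx orbT.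
  have -> : i.+1 = size p by apply/eqP; rewrite eqn_leq i_lt leqNgt i1_lt.
  by rewrite spine_last !inE eqxx orbT.
Qed.

Lemma rank_Some v : 0 < rank (Some v) <= size vertices.
Proof. by rewrite /rank leq_subr subn_gt0 index_mem vertices_cover. Qed.

Lemma rank_inj : injective rank.
Proof.
move=> x y; have pos := rank_Some; case: x y => [v|] [w|] //= e.
- congr Some; apply: (index_inj s (vertices_cover v) (vertices_cover w)).
  by move: (pos v) (pos w); rewrite /= e; lia.
- by move: (pos v); rewrite /= e.
- by move: (pos w); rewrite /= -e.
Qed.

Lemma index_vertices x : x \in inner -> index x vertices = (index x inner).+2.
Proof.
move=> xi /=.
have /negbTE -> : s != x by apply: contraNneq s_notin_inner => ->.
by have /negbTE -> : t != x by apply: contraNneq t_notin_inner => ->.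
Qed.

Lemma rank_parent y : y != None -> rank (parent y) < rank y.
Proof.
case: y => [v|] // _; have /andP [v_pos _] := rank_Some v.
rewrite /parent; case vi: (v \in inner) => //.
case: (inner_nth vi); set p := path_of v; set i := index v p => pin i_lt vE.
case: ifP => // i1_lt; case: (path_of_nth pin i1_lt) => wi _ _.
rewrite /rank !index_vertices // (index_inner_succ pin i1_lt) -vE /=.
have : index v inner < size inner by rewrite index_mem.
lia.
Qed.

Lemma path_edge_in_bag p m : p \in ps -> m <= size p ->
  exists y, [set q p m; q p m.+1] \subset bag y.
Proof.
move=> pin m_le.
have sub2 (a b : V) (X : {set V}) : a \in X -> b \in X -> [set a; b] \subset X.
  by move=> aX bX; apply/subsetP => z; rewrite !inE => /orP [] /eqP ->.
have [m_lt | [lt_m | [m_eq [m_lt | m_eq']]]] : m < first_heavy p \/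
    first_heavy p < m \/ (m = first_heavy p /\ (m < size p \/ m = size p)) by lia.
- exists None; apply: sub2; apply: spine_in_root_bag => //.
  + by rewrite ltnW.
  + exact: leqW.
  + by rewrite m_lt.
- case: m lt_m m_le => [|m] // lt_m m_le.
  by exists (Some (nth s p m)); rewrite bag_at //; apply: sub2; rewrite !inE eqxx ?orbT.
- exists (Some (nth s p m)); rewrite (bag_at pin m_lt (eq_leq (esym m_eq))).
  by apply: sub2; rewrite /anchor -m_eq !inE eqxx ?orbT.
- exists None; apply: sub2; apply: spine_in_root_bag => //.
  + by rewrite m_eq leqnn.
  + exact: leqW.
  + by rewrite m_eq' eqxx orbT.
Qed.

Lemma bag_cases y : bag y = root_bag \/ bag y = set0 \/
  exists p i, [/\ p \in ps, i < size p, first_heavy p <= i &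
                  bag y = [set anchor p; q p i.+1; q p i.+2]].
Proof.
case: y => [v|]; last by left.
rewrite /bag; case: ifP => vi; last by right; left.
case: ifP => hi; last by right; left.
by case: (inner_nth vi) => pin i_lt _; right; right; exists (path_of v), (index v (path_of v)).
Qed.

Lemma series_parallel_ghd (E : {set {set V}}) :
  E = [set e | has (fun p => e \in path_edges s t p) ps] ->
  exists k (par : 'I_k.+1 -> 'I_k.+1) (chi : 'I_k.+1 -> {set V}),
    is_GHD E par chi /\ forall i, exists y, chi i = bag y.
Proof.
move=> E_def; have [|k [par [chi [ghd chi_bag]]]] := ghd_of_rooted_tree (E := E)
  (root := None) (parent := parent) (rank := rank) rank_inj erefl rank_parent _ bag_top.
  move=> e; rewrite E_def inE => /hasP [p pin /path_edgesP [m m_le ->]].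
  exact: path_edge_in_bag.
exists k, par, chi; split => // i.
have [->|//] := chi_bag i; exists (Some s).
by rewrite /bag (negbTE s_notin_inner).
Qed.

End SeriesParallelTree.

Section BagWidths.
Local Open Scope R_scope.
Variables (V D : finType) (s t : V) (ps : seq (seq V)) (E : {set {set V}}).
Variables (I : {set V} -> relation V D) (c : {set V} -> {set V} -> nat) (N M : nat).
Variable h : {set V} -> R.
Hypothesis vertices_uniq : uniq (s :: t :: flatten ps).
Hypothesis E_def : E = [set e | has (fun p => e \in path_edges s t p) ps].
Hypothesis st_edge : [set s; t] \in E.
Hypothesis I_N : instance_N E I N.
Hypothesis M_gt0 : (0 < M)%N.
Hypothesis M_le : (2 ^ M <= IN E I)%N.
Hypothesis h_feasible : feasible (IN E I) E (Rc I c) h.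

Local Notation n := (IN E I).
Local Notation q p := (nth s (spine s t p)).

Definition heavy_edge (p : seq V) (m : nat) : bool :=
  (n <= (2 ^ c [set q p m; q p m.+1] [set q p m]) ^ M)%N.

Local Notation first_heavy := (first_heavy heavy_edge).
Local Notation anchor := (anchor s t heavy_edge).

Lemma n_gt1 : (1 < n)%N.
Proof. by apply: leq_trans M_le; rewrite -{1}(expn1 2) leq_exp2l. Qed.

Lemma spine_edge_in p m : p \in ps -> (m <= size p)%N -> [set q p m; q p m.+1] \in E.
Proof.
by move=> pin m_le; rewrite E_def inE; apply/hasP; exists p => //; apply/path_edgesP; exists m.
Qed.

Lemma h_set0 : h set0 = 0.
Proof. by case: h_feasible. Qed.

Lemma h_mono (X Y : {set V}) : X \subset Y -> h X <= h Y.
Proof. by case: h_feasible => _ [mono _]; apply: mono. Qed.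

Lemma h_extend (W A B e : {set V}) : e \in E -> A \subset W -> A \subset B -> B \subset e ->
  h (W :|: B) <= h W + dcoef n A B (Rc I c e).
Proof.
move=> eE AW AB Be; case: h_feasible => _ [_ step].
by have := step e eE W A B AB Be; rewrite setUC (setUidPr AW).
Qed.

Lemma dcoef_edge e : e \in E -> dcoef n set0 e (Rc I c e) <= 1.
Proof.
move=> eE; rewrite /dcoef /dmax eqxx; apply: logb_le1; first exact: n_gt1.
apply: leq_trans (leq_imset_card _ _) _.
apply: leq_trans (subset_leq_card (Rc_subset I c e)) _.
by have [-> _] := I_N eE; apply: N_le_IN I_N st_edge.
Qed.

Lemma dcoef_heavy e v : e \in E -> v \in e -> (n <= (2 ^ c e [set v]) ^ M)%N ->
  dcoef n set0 [set v] (Rc I c e) <= 1 - / INR M.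
Proof.
move=> eE ve heavy; rewrite /dcoef /dmax eqxx.
apply: (logb_heavy (k := c e [set v])) => //; first exact: n_gt1.
apply: leq_trans (card_projR1_Rc I c ve) _.
by have [-> _] := I_N eE; apply: N_le_IN I_N st_edge.
Qed.

Lemma dcoef_light e v : e \in E -> v \in e -> ((2 ^ c e [set v]) ^ M < n)%N ->
  dcoef n [set v] e (Rc I c e) <= 2 / INR M.
Proof.
move=> eE ve light; apply: (logb_light (k := c e [set v])) => //; first exact: n_gt1.
exact: dmax1_projR_Rc.
Qed.

Lemma path_bag_width p i : p \in ps -> (i < size p)%N -> (first_heavy p <= i)%N ->
  h [set anchor p; q p i.+1; q p i.+2] <= 2 - / INR M.
Proof.
move=> pin i_lt hi; have le_p : (first_heavy p <= size p)%N by apply: leq_trans hi (ltnW i_lt).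
have heavy := heavy_first_heavy le_p.
have anchor_edge := spine_edge_in pin le_p.
have i_edge := spine_edge_in pin i_lt.
have a_in : anchor p \in [set anchor p; q p (first_heavy p).+1] by rewrite !inE eqxx.
have h_a := h_extend (W := set0) anchor_edge (sub0set _) (sub0set _)
  (_ : [set anchor p] \subset _).
rewrite set0U h_set0 sub1set a_in in h_a; have {}h_a := h_a isT.
have d_a := dcoef_heavy anchor_edge a_in heavy.
have h_i := h_extend (W := [set anchor p]) i_edge (sub0set _) (sub0set _) (subxx _).
have d_i := dcoef_edge i_edge.
have -> : [set anchor p; q p i.+1; q p i.+2] = [set anchor p] :|: [set q p i.+1; q p i.+2].
  by rewrite setUA.
lra.
Qed.

Lemma spine_in_prefix p (X : {set V}) l : p \in ps -> s \in X -> (l < size p)%N ->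
  q p l \in X :|: [set x in take l p].
Proof.
move=> pin sX; case: l => [|l] l_lt; first by rewrite /= inE sX.
have l_lt' : (l < size p)%N by apply: ltnW.
rewrite (spineS s t l_lt') !inE (in_take _ (mem_nth s l_lt')).
by rewrite (index_uniq s l_lt' (path_uniq vertices_uniq pin)) ltnSn orbT.
Qed.

Lemma light_prefix_width p (X : {set V}) l : p \in ps -> s \in X ->
  (l <= first_heavy p)%N -> (l <= size p)%N ->
  h (X :|: [set x in take l p]) <= h X + INR l * (2 / INR M).
Proof.
move=> pin sX; elim: l => [|l IH] l_fh l_le.
  rewrite take0 (_ : [set x in [::]] = set0) ?setU0 /=; first lra.
  by apply/setP => x; rewrite !inE.
have l_lt : (l < size p)%N by [].
have {}IH := IH (ltnW l_fh) (ltnW l_le).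
have l_edge := spine_edge_in pin (ltnW l_le).
have ql_e : q p l \in [set q p l; q p l.+1] by rewrite !inE eqxx.
have ql_W : [set q p l] \subset X :|: [set x in take l p].
  by rewrite sub1set spine_in_prefix.
have step := h_extend l_edge ql_W (_ : [set q p l] \subset _) (subxx _).
rewrite sub1set ql_e in step; have {}step := step isT.
have light : ((2 ^ c [set q p l; q p l.+1] [set q p l]) ^ M < n)%N.
  by rewrite ltnNge; apply: (before_first_heavy (heavy := heavy_edge)).
have d_l := dcoef_light l_edge ql_e light.
have grow : h (X :|: [set x in take l.+1 p]) <=
            h ((X :|: [set x in take l p]) :|: [set q p l; q p l.+1]).
  apply: h_mono; apply/subsetP => z.
  rewrite (take_nth s l_lt) !inE mem_rcons inE -(spineS s t l_lt).
  by case/orP => [->|/orP [->|->]]; rewrite ?orbT.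
rewrite S_INR; lra.
Qed.

Lemma root_prefix_width ps' : {subset ps' <= ps} ->
  h ([set s; t] :|: [set x | has (fun p => x \in take (first_heavy p) p) ps'])
    <= 1 + INR (size (flatten ps')) * (2 / INR M).
Proof.
have two_M_ge0 : 0 <= 2 / INR M by apply: Rle_mult_inv_pos; [lra | apply: INR_gt0].
elim: ps' => [|p ps' IH] sub.
  rewrite (_ : [set x | has _ [::]] = set0) ?setU0; last by apply/setP => x; rewrite !inE.
  have h_st := h_extend (W := set0) st_edge (sub0set _) (sub0set _) (subxx _).
  by have := dcoef_edge st_edge; rewrite set0U h_set0 in h_st; rewrite /=; lra.
have pin : p \in ps by apply: sub; rewrite inE eqxx.
have sub' : {subset ps' <= ps} by move=> p' p'in; apply: sub; rewrite inE p'in orbT.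
have {sub' sub}IH := IH sub'.
set R := [set x | has _ ps'] in IH.
set l := minn (first_heavy p) (size p).
have -> : [set s; t] :|: [set x | has (fun p => x \in take (first_heavy p) p) (p :: ps')] =
          ([set s; t] :|: R) :|: [set x in take l p].
  apply/setP => z; rewrite !inE /= take_min take_size.
  by case: (z \in R); case: (z \in take _ _); rewrite ?orbT ?orbF.
have sX : s \in [set s; t] :|: R by rewrite !inE eqxx.
have walk := light_prefix_width pin sX (geq_minl _ _) (geq_minr _ _); rewrite -/l in walk.
have l_le : INR l <= INR (size p) by apply/le_INR/leP/geq_minr.
have := Rmult_le_compat_r _ _ _ two_M_ge0 l_le.
have -> : size (flatten (p :: ps')) = (size p + size (flatten ps'))%N by rewrite /= size_cat.
rewrite plus_INR; lra.
Qed.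

Lemma root_bag_width : M = (2 * #|V|).+1 -> h (root_bag s t ps heavy_edge) <= 2 - / INR M.
Proof.
move=> M_def; have := root_prefix_width (fun p pin => pin).
have M_pos : 0 < INR M by apply: INR_gt0.
set u := / INR M; set K := INR (size (flatten ps)).
have K_le : K <= INR #|V|.
  apply/le_INR/leP; move: vertices_uniq => /= /andP [_ /andP [_ vs_uniq]].
  by rewrite -(card_uniqP vs_uniq) max_card.
have u_pos : 0 < u by apply: Rinv_0_lt_compat.
have uK : u * K <= u * INR #|V| by apply: Rmult_le_compat_l; lra.
have M_eq : INR M = 2 * INR #|V| + 1 by rewrite M_def -addn1 plus_INR mult_INR.
have u_M : 2 * (u * INR #|V|) + u = 1.
  by rewrite -(Rinv_l (INR M)) -/u ?M_eq; [ring | lra].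
have -> : K * (2 / INR M) = 2 * (u * K) by rewrite /Rdiv /u; ring.
rewrite /root_bag; lra.
Qed.

Lemma bag_width y : M = (2 * #|V|).+1 -> h (bag s t ps heavy_edge y) <= 2 - / INR M.
Proof.
move=> M_def; case: (bag_cases s t ps heavy_edge y) => [->|[->|[p [i [pin i_lt hi ->]]]]].
- exact: root_bag_width.
- have : / INR M <= 1.
    by rewrite -Rinv_1; apply: Rinv_le_contravar; [lra | apply/(le_INR 1)/leP].
  by rewrite h_set0; lra.
- exact: path_bag_width.
Qed.

End BagWidths.

Theorem lemmaF3 (V : finType) (E : {set {set V}}) (s t : V) :
  is_1SP E s t -> [set s; t] \in E ->
  exists eps : R, Rlt R0 eps /\
  exists N0 : nat, forall N : nat, N0 <= N ->
    forall (D : finType) (I : {set V} -> relation V D),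
      instance_N E I N -> mwidth_le E I (Rminus 2 eps).
Proof.
move=> [_ [ps [vs_uniq vs_cover E_def]]] st_edge.
pose M := (2 * #|V|).+1.
exists (Rinv (INR M)); split; first exact/Rinv_0_lt_compat/INR_gt0.
exists (2 ^ M) => N N_ge D I I_N c _.
have [k [par [chi [ghd chi_bag]]]] :=
  series_parallel_ghd vs_uniq vs_cover (heavy_edge s t E I c M) E_def.
exists k, par, chi; split => // i h h_feasible.
have [y ->] := chi_bag i.
apply: (bag_width vs_uniq E_def st_edge I_N _ _ h_feasible) => //.
exact: leq_trans N_ge (N_le_IN I_N st_edge).
Qed.
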